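(* Let $X$ be a topological space whose frame of open sets has a presentation $\mathcal{O}X=\langle G\mid R\rangle$, with quotient frame homomorphism $\overline{q}\colon\mathcal{O}(\Sigma^G)\to\mathcal{O}X$, and give $\mathcal{O}(\Sigma^G)$ and $\mathcal{O}X$ their Scott topologies. If $\overline{q}\times\mathrm{id}_X\colon\mathcal{O}(\Sigma^G)\times X\to\mathcal{O}X\times X$ is a quotient map of topological spaces, then $\mathcal{O}X$ with the Scott topology, together with the evaluation map $\mathrm{ev}\colon\mathcal{O}X\times X\to\Sigma$, $\mathrm{ev}(U,x)=\top\iff x\in U$, is the exponential $\Sigma^X$ in $\mathrm{Top}$.
   Context: $\Sigma$ is Sierpiński space $\{\bot,\top\}$ with $\{\top\}$ open. For a set $G$, $\mathcal{O}(\Sigma^G)$ denotes the free frame on $G$ (frames: complete lattices with finite meets distributing over arbitrary joins). A presentation $\mathcal{O}X=\langle G\mid R\rangle$ means the frame of opens of $X$ is the quotient of the free frame on $G$ by the congruence generated by $R$, with quotient homomorphism $\overline{q}$. Scott topology on a poset with directed joins: $V$ is open iff it is an upset and whenever the join of a directed set lies in $V$ some member of that set lies in $V$. One has a continuous map $\widetilde{\mathrm{ev}}\colon\mathcal{O}(\Sigma^G)\times X\to\Sigma$, $\widetilde{\mathrm{ev}}(m,x)=\top$ iff $x\in\overline{q}(m)$, which has the weak universal property: every continuous $h\colon A\times X\to\Sigma$ factors (not necessarily uniquely) as $\widetilde{\mathrm{ev}}\circ(h'\times X)$. *)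

From HB Require Import structures.
From mathcomp Require Import all_boot all_order.
From mathcomp Require Import boolp classical_sets topology function_spaces.

Set Implicit Arguments.
Unset Strict Implicit.
Unset Printing Implicit Defensive.
Local Open Scope classical_set_scope.

Section OrderNotions.
Variables (T : Type) (le : T -> T -> Prop).

Definition is_ub (D : set T) (u : T) := forall d, D d -> le d u.
Definition is_lb (D : set T) (u : T) := forall d, D d -> le u d.
Definition is_lub (D : set T) (s : T) :=
  is_ub D s /\ forall u, is_ub D u -> le s u.
Definition is_glb (D : set T) (m : T) :=
  is_lb D m /\ forall u, is_lb D u -> le u m.
Definition is_top (t : T) := forall u, le u t.

Definition directed (D : set T) :=
  (exists d, D d) /\
  forall a b, D a -> D b -> exists2 c, D c & le a c /\ le b c.

Definition scott_open (V : set T) :=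
  (forall x y, le x y -> V x -> V y) /\
  (forall D s, directed D -> is_lub D s -> V s -> exists2 d, D d & V d).

Lemma scott_openT : scott_open setT.
Proof. split=> // D s [[d Dd] _] _ _; by exists d. Qed.

Lemma scott_openI : setI_closed scott_open.
Proof.
move=> A B [uA dA] [uB dB]; split.
  by move=> x y xy [Ax Bx]; split; [exact: (uA x) | exact: (uB x)].
move=> D s Ddir sl [As Bs].
have [a Da Aa] := dA D s Ddir sl As.
have [b Db Bb] := dB D s Ddir sl Bs.
have [c Dc [ac bc]] := Ddir.2 a b Da Db.
by exists c => //; split; [exact: (uA a) | exact: (uB b)].
Qed.

Lemma scott_open_bigU (I : Type) (f : I -> set T) :
  (forall i, scott_open (f i)) -> scott_open (\bigcup_i f i).
Proof.
move=> fo; split.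
  by move=> x y xy [i _ fi_x]; exists i => //; apply: (fo i).1 fi_x.
move=> D s Ddir sl [i _ fi_s].
have [d Dd fi_d] := (fo i).2 D s Ddir sl fi_s.
by exists d => //; exists i.
Qed.
End OrderNotions.

(** * Sierpinski space: bool with {true} open. *)
Definition Sierp : Type := bool.
HB.instance Definition _ := Choice.copy Sierp bool.
Definition sierp_open (U : set Sierp) : Prop := U false -> U true.

Lemma sierp_openT : sierp_open setT. Proof. by []. Qed.
Lemma sierp_openI : setI_closed sierp_open.
Proof. by move=> A B hA hB [/hA ? /hB ?]. Qed.
Lemma sierp_open_bigU (I : Type) (f : I -> set Sierp) :
  (forall i, sierp_open (f i)) -> sierp_open (\bigcup_i f i).
Proof. by move=> fo [i _ fi]; exists i => //; apply: fo. Qed.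

HB.instance Definition _ :=
  isOpenTopological.Build Sierp sierp_openT sierp_openI sierp_open_bigU.

Definition opens (Y : topologicalType) : Type := {U : set Y | open U}.
HB.instance Definition _ (Y : topologicalType) := gen_eqMixin (opens Y).
HB.instance Definition _ (Y : topologicalType) := gen_choiceMixin (opens Y).

Definition opens_le (Y : topologicalType) (U V : opens Y) : Prop :=
  proj1_sig U `<=` proj1_sig V.

HB.instance Definition _ (Y : topologicalType) :=
  isOpenTopological.Build (opens Y) (@scott_openT _ (@opens_le Y))
    (@scott_openI _ (@opens_le Y)) (@scott_open_bigU _ (@opens_le Y)).

Definition SigmaPow (G : Type) : topologicalType := {ptws G -> Sierp}.
Definition freeFrame (G : Type) : topologicalType := opens (SigmaPow G).

Definition frame_hom (Y Z : topologicalType) (f : opens Y -> opens Z) : Prop :=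
  [/\ (forall t, is_top (@opens_le Y) t -> is_top (@opens_le Z) (f t)),
      (forall a b m, is_glb (@opens_le Y) [set a; b] m ->
                     is_glb (@opens_le Z) [set f a; f b] (f m)) &
      (forall (S : set (opens Y)) s, is_lub (@opens_le Y) S s ->
                     is_lub (@opens_le Z) (f @` S) (f s))].

Definition surjective (A B : Type) (f : A -> B) : Prop :=
  forall b, exists a, f a = b.

Definition frame_congruence (Y : topologicalType)
    (C : opens Y -> opens Y -> Prop) : Prop :=
  [/\ (forall a, C a a), (forall a b, C a b -> C b a),
      (forall a b c, C a b -> C b c -> C a c),
      (forall a a' b b' m m', C a a' -> C b b' ->
         is_glb (@opens_le Y) [set a; b] m ->
         is_glb (@opens_le Y) [set a'; b'] m' -> C m m') &
      (forall (I : Type) (f f' : I -> opens Y) s s',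
         (forall i, C (f i) (f' i)) ->
         is_lub (@opens_le Y) (range f) s ->
         is_lub (@opens_le Y) (range f') s' -> C s s')].

(** [q : O(Sigma^G) -> O X] exhibits O X = < G | R >: q is a surjective frame
    homomorphism whose kernel is the frame congruence generated by R. *)
Definition presentation (X : topologicalType) (G : Type)
    (R : set (freeFrame G * freeFrame G)) (q : freeFrame G -> opens X) : Prop :=
  [/\ frame_hom q, surjective q &
      forall m n, q m = q n <->
        (forall C, frame_congruence C -> (forall r, R r -> C r.1 r.2) -> C m n)].

Definition quotient_map (S T : topologicalType) (f : S -> T) : Prop :=
  surjective f /\ forall V : set T, open V <-> open (f @^-1` V).

Definition ev (X : topologicalType) (p : opens X * X) : Sierp :=
  `[< proj1_sig p.1 p.2 >].

Definition is_exponential (X E : topologicalType) (e : E * X -> Sierp) : Prop :=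
  continuous e /\
  forall (A : topologicalType) (h : A * X -> Sierp), continuous h ->
    exists! h' : A -> E, continuous h' /\ forall a x, e (h' a, x) = h (a, x).

From HB Require Import structures.
From mathcomp Require Import all_boot all_order.
From mathcomp Require Import boolp classical_sets topology function_spaces.

Set Implicit Arguments.
Unset Strict Implicit.
Unset Printing Implicit Defensive.
Local Open Scope classical_set_scope.

(* Transposes into [opens X] with its Scott topology always exist and are
   unique, so [opens X] is the exponential as soon as [ev] is continuous, i.e.
   as soon as membership is open in [opens X * X]. Through the quotient map it
   suffices that [{(m, x) | x \in q m}] be open in [freeFrame G * X]: every [m]
   is the join of the finite cylinders below it, [q] preserves joins, and the
   opens containing a given cylinder form a Scott open set because a cylinder
   has a least point. *)

Section SierpinskiPower.
Variable G : Type.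
Local Notation S := (SigmaPow G).
Local Notation coordinate_topologies :=
  (fun i => Topological.class
    (initial_topology (fun f : (forall i, Sierp) => f i))).

Definition cylinder (s : seq G) : set S := [set g | all g s].

Definition cylinder_inf (s : seq G) : S :=
  fun i => `[< cylinder s `<=` [set g : S | g i] >].

Lemma cylinder_cons i s : cylinder (i :: s) = [set g : S | g i] `&` cylinder s.
Proof. by apply/seteqP; split=> g /= /andP. Qed.

Lemma open_coord i : open [set g : S | g i].
Proof.
rewrite openE => g gi.
have [+ _] := @cvg_sup _ G coordinate_topologies (nbhs g) g _.
move=> /(_ (@cvg_id _ _) i); apply; rewrite nbhsE /=.
by exists [set h : S | h i = true] => //; split=> //; exists [set true].
Qed.

Lemma open_cylinder s : open (cylinder s).
Proof.
elim: s => [|i s IHs].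
  have -> : cylinder [::] = setT by apply/seteqP.
  exact: openT.
by rewrite cylinder_cons; apply: openI => //; exact: open_coord.
Qed.

Lemma cylinder_basis (m : set S) f :
  open m -> m f -> exists2 s, all f s & cylinder s `<=` m.
Proof.
(* The filter of cylinders around [f] converges to [f] in every coordinate. *)
pose B := filter_from [set s | all f s] cylinder.
have B_filter : Filter B.
  apply: filter_from_filter; first by exists [::].
  move=> s t fs ft; exists (s ++ t).
    by change (all f (s ++ t)); rewrite all_cat fs.
  by move=> g; rewrite /cylinder /= all_cat => /andP.
have [_] := @cvg_sup _ G coordinate_topologies B f B_filter.
move=> /(_ _ m) + om mf; apply; last by apply: open_nbhs_nbhs.
move=> i A; rewrite nbhsE => -[_ [[C oC <-] Cf] CA].
apply: filterS CA _; case fi: (f i).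
- exists [:: i] => [|g]; first by change (f i && true); rewrite fi.
  by rewrite /cylinder /= andbT => gi; rewrite /preimage /= gi -fi.
- exists [::] => // g _; move: Cf; rewrite /preimage /= fi => C0.
  by case: (g i) => //; exact: oC.
Qed.

Lemma cylinder_inf_in s : cylinder s (cylinder_inf s).
Proof.
elim: s => //= i s IHs; apply/andP; split; first by apply/asboolP => g /andP[].
by apply: sub_all IHs => j /asboolP sj; apply/asboolP => g /andP[_ /sj].
Qed.

Lemma cylinder_inf_sub s t :
  cylinder t (cylinder_inf s) -> cylinder s `<=` cylinder t.
Proof. by move=> + g gs; apply: sub_all => j /asboolP; apply. Qed.

End SierpinskiPower.

Lemma opens_eq (Y : topologicalType) (u v : opens Y) :
  proj1_sig u = proj1_sig v -> u = v.
Proof. by case: u v => u ou [v ov] /= uv; exact: eq_exist. Qed.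

Lemma opens_lubE (Y : topologicalType) (D : set (opens Y)) s :
  is_lub (@opens_le Y) D s -> proj1_sig s = \bigcup_(u in D) proj1_sig u.
Proof.
move=> [ub least]; apply/seteqP; split; last by move=> y [u Du]; exact: ub.
have oU : open (\bigcup_(u in D) proj1_sig u).
  by apply: bigcup_open => u _; exact: proj2_sig.
by apply: (least (exist _ _ oU)) => u Du y uy; exists u.
Qed.

Section JoinPreserving.
Variables (Y Z : topologicalType) (f : opens Y -> opens Z).
Hypothesis f_lub : forall (D : set (opens Y)) s,
  is_lub (@opens_le Y) D s -> is_lub (@opens_le Z) (f @` D) (f s).

Lemma join_preserving_le u v : opens_le u v -> opens_le (f u) (f v).
Proof.
move=> uv; have uv_lub : is_lub (@opens_le Y) [set u; v] v.
  by split=> [w [->|->] //|w]; apply; right.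
by apply: (f_lub uv_lub).1; exists u => //; left.
Qed.

End JoinPreserving.

Section FreeFrame.
Variable G : Type.

(* An open containing [cylinder s] contains its least point, hence a cylinder
   around that point, which already contains [cylinder s]. *)
Lemma scott_open_above_cylinder s :
  scott_open (@opens_le _) [set m : freeFrame G | cylinder s `<=` proj1_sig m].
Proof.
split=> [m m' mm' sm | D l _ Dl sl]; first exact: subset_trans mm'.
have : proj1_sig l (cylinder_inf s) by apply: sl; exact: cylinder_inf_in.
rewrite (opens_lubE Dl) => -[d Dd dinf]; exists d => //.
have [t inft td] := cylinder_basis (proj2_sig d) dinf.
by apply: subset_trans td; exact: cylinder_inf_sub.
Qed.

Lemma cylinders_below_lub (m : freeFrame G) :
  is_lub (@opens_le _)
    [set u : freeFrame G |
      (exists s, proj1_sig u = cylinder s) /\ opens_le u m] m.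
Proof.
split=> [u [_ um] // | w ub f mf].
have [s fs sm] := cylinder_basis (proj2_sig m) mf.
by apply: (ub (exist _ _ (open_cylinder s))) => //; split; [exists s|].
Qed.

Variables (X : topologicalType) (q : freeFrame G -> opens X).
Hypothesis q_lub : forall (D : set (freeFrame G)) s,
  is_lub (@opens_le _) D s -> is_lub (@opens_le X) (q @` D) (q s).

Lemma open_mem_join_preserving :
  open [set p : freeFrame G * X | proj1_sig (q p.1) p.2].
Proof.
rewrite openE => -[m x] /=.
rewrite (opens_lubE (q_lub (cylinders_below_lub m))).
move=> -[_ [u [[s us] um] <-] xqu].
exists ([set m' : freeFrame G | cylinder s `<=` proj1_sig m'], proj1_sig (q u)).
  split; apply: open_nbhs_nbhs; split => //=.
  - exact: scott_open_above_cylinder.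
  - by rewrite -us.
  - exact: proj2_sig.
move=> [m' x'] /= [sm' qx']; apply: (join_preserving_le q_lub _ qx').
by rewrite /opens_le us.
Qed.

End FreeFrame.

Lemma sierp_continuousP (T : topologicalType) (f : T -> Sierp) :
  continuous f <-> open [set t | f t].
Proof.
split=> [/continuousP fc | f_open].
  by apply: fc; rewrite /open /= /sierp_open.
apply/continuousP => A oA.
have [Afalse|nAfalse] := pselect (A false).
  have -> : f @^-1` A = setT.
    apply/seteqP; split=> // t _; change (A (f t)).
    by case: (f t) => //; exact: oA.
  exact: openT.
have [Atrue|nAtrue] := pselect (A true).
  have -> // : f @^-1` A = [set t | f t].
  by apply/seteqP; split=> t; rewrite /preimage /=; case: (f t).
have -> : f @^-1` A = set0.
  by apply/seteqP; split=> t //; change (A (f t) -> False); case: (f t).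
exact: open0.
Qed.

Section Transpose.
Variables (A X : topologicalType) (W : set (A * X)).
Hypothesis oW : open W.

Lemma open_rectangle a x : W (a, x) ->
  exists N M, [/\ open N, N a, open M, M x & N `*` M `<=` W].
Proof.
move: oW; rewrite openE => /[apply] -[[P Q] /= [Pa Qx] PQW].
move: Pa Qx; rewrite !nbhsE => -[N [oN Na] NP] [M [oM Mx] MQ].
by exists N, M; split=> // -[a' y] [/NP Pa' /MQ Qy]; exact: PQW.
Qed.

Lemma open_slice a : open [set x | W (a, x)].
Proof.
rewrite openE => x /open_rectangle [N [M [_ Na oM Mx NMW]]].
apply: (@filterS _ _ _ M); first by move=> y My; exact: (NMW (a, y)).
exact: open_nbhs_nbhs.
Qed.

Definition slice a : opens X := exist _ _ (open_slice a).

(* [slice a0] is the directed join of the opens [U] with [N `*` U `<=` W] for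
   some neighbourhood [N] of [a0]; Scott openness of [V] picks one of them. *)
Lemma slice_continuous : continuous slice.
Proof.
apply/continuousP => V [V_up V_inacc]; rewrite openE => a0 Va0.
pose D := [set u : opens X |
  exists N, [/\ open N, N a0 & N `*` proj1_sig u `<=` W]].
have D_directed : directed (@opens_le X) D.
  split.
    exists (exist _ set0 open0); exists setT.
    by split=> //; [exact: openT | move=> ? []].
  move=> u v [N [oN Na NuW]] [N' [oN' Na' NvW]].
  exists (exist _ _ (openU (proj2_sig u) (proj2_sig v))).
    exists (N `&` N'); split=> //; first exact: openI.
    move=> [a y] [[/= Na1 Na1'] [uy|vy]]; first exact: (NuW (a, y)).
    exact: (NvW (a, y)).
  by split=> y yu; [left|right].
have D_lub : is_lub (@opens_le X) D (slice a0).
  split=> [u [N [_ Na NuW]] y uy | w ub y Wy]; first exact: (NuW (a0, y)).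
  have [N [M [oN Na oM My NMW]]] := open_rectangle Wy.
  by apply: (ub (exist _ M oM)) => //; exists N.
have [d [N [oN Na NdW]] Vd] := V_inacc D _ D_directed D_lub Va0.
apply: (@filterS _ _ _ N); last exact: open_nbhs_nbhs.
by move=> a Na'; apply: V_up Vd => y dy; exact: (NdW (a, y)).
Qed.

End Transpose.

Lemma is_exponential_ev (X : topologicalType) :
  open [set p : opens X * X | proj1_sig p.1 p.2] -> is_exponential (@ev X).
Proof.
move=> o_mem; split.
  apply/sierp_continuousP.
  by have -> : [set p | ev p] = [set p : opens X * X | proj1_sig p.1 p.2]
    by apply/seteqP; split=> p /asboolP.
move=> A h /sierp_continuousP o_h; exists (slice o_h); split.
  by split=> [|a x]; [exact: slice_continuous | exact: asboolb].
move=> k [_ kE]; apply: funext => a; apply: opens_eq; apply/seteqP.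
by split=> x /=; rewrite -kE => /asboolP.
Qed.

Theorem mainTheorem5 (X : topologicalType) (G : Type)
  (R : set (freeFrame G * freeFrame G)) (q : freeFrame G -> opens X) :
  presentation R q ->
  quotient_map (fun p : freeFrame G * X => (q p.1, p.2)) ->
  is_exponential (@ev X).
Proof.
move=> [[_ _ q_lub] _ _] [_ q_quotient]; apply: is_exponential_ev.
by apply/q_quotient; exact: open_mem_join_preserving.
Qed.
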